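(* Let $k\ge 1$ be such that $p=2k+1$ is a prime with $p\ne 3$. Then in $\mathbb{F}_p[q]$: (1) $\gcd(q^{p-1}-1,\,P_{k-1}(q))$ divides $q^4-1$; (2) $\gcd(q^{p+1}-1,\,P_{k-1}(q))$ divides $(q^4-1)(q^3-1)$.
   Context: $P_{k-1}(q)=1+\sum_{l=1}^{k} q^{4l-4}(q^4-q^3-q^2-q)$, reduced modulo $p$. Also $Q_{k-1}(q)=(q^4-1)P_{k-1}(q)=q^{4k+4}-q^{4k+3}-q^{4k+2}-q^{4k+1}+q^3+q^2+q-1$. *)

From HB Require Import structures.
From mathcomp Require Import all_boot all_order all_algebra all_field.
Set Implicit Arguments. Unset Strict Implicit. Unset Printing Implicit Defensive.
Import GRing.Theory.
Local Open Scope ring_scope.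

(* The paper's P_{k-1}(q) = 1 + sum_{l=1}^{k} q^{4l-4}(q^4-q^3-q^2-q),
   as a polynomial over an arbitrary ring R (R = 'F_p gives the reduction mod p). *)
Definition P_pred (R : nzRingType) (k : nat) : {poly R} :=
  1 + \sum_(1 <= l < k.+1) 'X^(4 * l - 4) * ('X^4 - 'X^3 - 'X^2 - 'X).

From HB Require Import structures.
From mathcomp Require Import all_boot all_order all_algebra all_field.
From mathcomp Require Import ring.
Import GRing.Theory.
Local Open Scope ring_scope.

(* Write S := q^3 - q^2 - q - 1, so that the summand of P_{k-1}
   is q^{4l-4} * q S.  The sum is a geometric series in q^4, whence the closed form
       (q^4 - 1) P_{k-1} = (q^4 - 1) + (q^{4k} - 1) q S,
   valid over any commutative ring.  Multiplying by q^3 and using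
   q^4 S = S + (q^4 - 1) S shifts the exponent from 4k to 4k + 4:
       q^3 (q^4 - 1) P_{k-1} = (q^4 - 1)(q^2 + q + 1) + (q^{4k+4} - 1) S.
   Now let g be a common divisor of P_{k-1} and q^n - 1.  Since q^n - 1 divides
   q^{2n} - 1, taking n = 2k (resp. n = 2k + 2) makes g divide the last summand
   of the first (resp. second) identity as well as its left-hand side, hence g
   divides q^4 - 1 (resp. (q^4 - 1)(q^2 + q + 1), a divisor of
   (q^4 - 1)(q^3 - 1)). *)

Section ClosedForm.
Variable R : comNzRingType.

(* The cubic S with q^4 - q^3 - q^2 - q = q * S. *)
Definition cubic_factor : {poly R} := 'X^3 - 'X^2 - 'X - 1.

Lemma P_pred_closed_form (k : nat) :
  ('X^4 - 1) * P_pred R k = ('X^4 - 1) + ('X^(4 * k) - 1) * ('X * cubic_factor).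
Proof.
rewrite /cubic_factor; elim: k => [|k IHk].
  by rewrite /P_pred big_geq // addr0 mulr1 muln0 expr0 subrr mul0r addr0.
rewrite /P_pred big_nat_recr //= (addrA 1) -/(P_pred R k).
have -> : (4 * k.+1 - 4 = 4 * k)%N by rewrite mulnS addKn.
rewrite mulrDr IHk mulnS exprD; ring.
Qed.

Lemma P_pred_shifted_form (k : nat) :
  'X^3 * (('X^4 - 1) * P_pred R k)
  = ('X^4 - 1) * ('X^2 + 'X + 1) + ('X^(4 * k + 4) - 1) * cubic_factor.
Proof. by rewrite P_pred_closed_form /cubic_factor exprD; ring. Qed.

End ClosedForm.

Section Divisibility.
Variable F : idomainType.

Lemma dvdp_Xn_sub1_double (n : nat) : ('X^n - 1 : {poly F}) %| 'X^(n + n) - 1.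
Proof.
have -> : 'X^(n + n) - 1 = ('X^n - 1) * ('X^n + 1) :> {poly F}.
  by rewrite exprD; ring.
exact: dvdp_mulr.
Qed.

Lemma dvdp_from_combination {g P u a c t : {poly F}} :
  u * P = a + c * t -> g %| P -> g %| c -> g %| a.
Proof.
move=> uP_eq gP gc.
have gct : g %| c * t by exact: dvdp_mulr.
by rewrite -(dvdp_addl a gct) -uP_eq dvdp_mull.
Qed.

Lemma gcdp_P_pred_even (k : nat) :
  gcdp ('X^(2 * k) - 1) (P_pred F k) %| 'X^4 - 1.
Proof.
apply: (dvdp_from_combination (P_pred_closed_form F k)); first exact: dvdp_gcdr.
have -> : (4 * k = 2 * k + 2 * k)%N by rewrite -mulnDl.
exact: dvdp_trans (dvdp_gcdl _ _) (dvdp_Xn_sub1_double _).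
Qed.

Lemma gcdp_P_pred_odd (k : nat) :
  gcdp ('X^(2 * k + 2) - 1) (P_pred F k) %| ('X^4 - 1) * ('X^3 - 1).
Proof.
have g_dvd : gcdp ('X^(2 * k + 2) - 1) (P_pred F k)
               %| ('X^4 - 1) * ('X^2 + 'X + 1).
  apply: (dvdp_from_combination (P_pred_shifted_form F k)).
    exact: dvdp_mull (dvdp_gcdr _ _).
  have -> : (4 * k + 4 = (2 * k + 2) + (2 * k + 2))%N.
    by rewrite addnACA -mulnDl.
  exact: dvdp_trans (dvdp_gcdl _ _) (dvdp_Xn_sub1_double _).
apply: dvdp_trans g_dvd _.
have -> : ('X^4 - 1) * ('X^3 - 1) = ('X^4 - 1) * ('X^2 + 'X + 1) * ('X - 1)
            :> {poly F} by ring.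
exact: dvdp_mulr.
Qed.

End Divisibility.

Theorem mainTheorem14 (k : nat) (hk : (1 <= k)%N) (hp : prime (2 * k + 1))
    (hp3 : (2 * k + 1 != 3)%N) :
  (gcdp ('X^((2 * k + 1).-1) - 1) (P_pred 'F_(2 * k + 1) k)
     %| 'X^4 - 1)
  /\
  (gcdp ('X^((2 * k + 1).+1) - 1) (P_pred 'F_(2 * k + 1) k)
     %| ('X^4 - 1) * ('X^3 - 1)).
Proof.
have -> : (2 * k + 1).-1 = (2 * k)%N by rewrite addn1.
have -> : (2 * k + 1).+1 = (2 * k + 2)%N by rewrite addn1 addn2.
split.
- exact: (gcdp_P_pred_even 'F_(2 * k + 1) k).
- exact: (gcdp_P_pred_odd 'F_(2 * k + 1) k).
Qed.
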